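(* Let $\mathcal{G}_1=\{(Q,\lambda)\in\mathsf{Sp}(n-1,\omega)\times\mathbb{R}_+:\dim\ker(Q-\lambda\,\mathrm{Id})=1\}$ and $\mathcal{G}_0=\{(Q,1)\in\mathcal{G}_1\}$. Then the projection $\pi\colon\mathcal{G}_1\to\mathbb{R}$, $\pi(Q,\lambda)=\lambda$, is a submersion around $\mathcal{G}_0$.
   Context: $\omega$ is the standard symplectic form on $\mathbb{R}^{2(n-1)}$, $\mathsf{Sp}(n-1,\omega)$ the real symplectic group, $\mathbb{R}_+=(0,\infty)$. $\mathcal{G}_1$ is a smooth hypersurface of the open set $\mathcal{G}=\{(Q,\lambda):\dim\ker(Q-\lambda\,\mathrm{Id})\le1\}\subseteq\mathsf{Sp}(n-1,\omega)\times\mathbb{R}_+$, being the zero set of $(Q,\lambda)\mapsto\det(Q-\lambda\,\mathrm{Id})$, which is a submersion near $\mathcal{G}_1$. *)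

From HB Require Import structures.
From mathcomp Require Import all_boot all_order all_algebra.
From mathcomp Require Import all_classical all_reals all_analysis.
Set Implicit Arguments. Unset Strict Implicit. Unset Printing Implicit Defensive.
Import Order.TTheory GRing.Theory Num.Theory.
Import numFieldNormedType.Exports.
Local Open Scope ring_scope.
Local Open Scope classical_set_scope.

(* Matrices on R^{2m}, m = n-1, written as R^m (+) R^m. *)

(* Standard symplectic form  omega(u,v) = u^T J v,  J = [[0, I],[-I, 0]]. *)
Definition Jstd (R : realType) (m : nat) : 'M[R]_(m + m) :=
  block_mx 0 1%:M (- 1%:M) 0.

Definition symplectic (R : realType) (m : nat) (Q : 'M[R]_(m + m)) : Prop :=
  Q^T *m Jstd R m *m Q = Jstd R m.

(* dim ker (Q - lambda Id), kernel acting on column vectors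
   (= row kernel of the transpose). *)
Definition dimker_shift (R : realType) (m : nat) (Q : 'M[R]_(m + m)) (l : R) : nat :=
  \rank (kermx (Q - l%:M)^T).

Definition G1 (R : realType) (m : nat) : set ('M[R]_(m + m) * R) :=
  [set p | symplectic p.1 /\ 0 < p.2 /\ dimker_shift p.1 p.2 = 1%N].

Definition G0 (R : realType) (m : nat) : set ('M[R]_(m + m) * R) :=
  [set p | @G1 R m p /\ p.2 = 1].

(* The differential at p of the projection pi(Q,lambda) = lambda restricted
   to G_1 is surjective onto R: some tangent vector of G_1 at p (velocity of
   a curve in G_1 through p, differentiable at 0) has nonzero lambda-component. *)
Definition proj_submersive_at (R : realType) (m : nat) (p : 'M[R]_(m + m) * R) : Prop :=
  exists (gQ : R -> 'M[R]_(m + m)) (gl : R -> R),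
    [/\ gQ 0 = p.1 /\ gl 0 = p.2,
        derivable gQ 0 1, derivable gl 0 1,
        (\forall t \near 0, @G1 R m (gQ t, gl t)) &
        'D_1 gl 0 != 0].

From HB Require Import structures.
From mathcomp Require Import all_boot all_order all_algebra.
From mathcomp Require Import all_classical all_reals all_analysis.
From mathcomp Require Import ring lra zify.
Import Order.TTheory GRing.Theory Num.Theory.
Import numFieldNormedType.Exports.
Set Implicit Arguments. Unset Strict Implicit. Unset Printing Implicit Defensive.
Local Open Scope ring_scope.
Local Open Scope classical_set_scope.

(* At (Q, l) in G1 pick an eigenvector v of Q for l and a vector u with
   omega(v, u) = 1.  The symplectic map A_s that scales v by s, u by 1/s and
   fixes their omega-orthogonal complement gives the curve
   t |-> (Q A_(1+t), l (1+t)) of symplectic matrices having v as eigenvector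
   for l (1+t), so the kernel of Q A_(1+t) - l (1+t) stays nontrivial; by lower
   semicontinuity of the rank it stays at most one-dimensional for small t.
   The l-component of the velocity of this curve is l <> 0. *)

Section RankLowerSemicontinuity.
Variables (R : numFieldType) (T : Type) (F : set_system T).

Section Limits.
Context {FF : Filter F}.

Lemma cvg_big_sum (I : Type) (r : seq I) (P : pred I) (G : I -> T -> R) (g : I -> R) :
  (forall i, G i t @[t --> F] --> g i) ->
  \sum_(i <- r | P i) G i t @[t --> F] --> \sum_(i <- r | P i) g i.
Proof.
move=> Gg; elim: r => [|a r IHr].
  by rewrite big_nil; under eq_fun do rewrite big_nil; exact: cvg_cst.
rewrite big_cons; under eq_fun do rewrite big_cons.
by case: (P a) => //; exact: cvgD.
Qed.

Lemma cvg_big_prod (I : Type) (r : seq I) (P : pred I) (G : I -> T -> R) (g : I -> R) :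
  (forall i, G i t @[t --> F] --> g i) ->
  \prod_(i <- r | P i) G i t @[t --> F] --> \prod_(i <- r | P i) g i.
Proof.
move=> Gg; elim: r => [|a r IHr].
  by rewrite big_nil; under eq_fun do rewrite big_nil; exact: cvg_cst.
rewrite big_cons; under eq_fun do rewrite big_cons.
by case: (P a) => //; exact: cvgM.
Qed.

Lemma cvg_mulmx_entries p q r (M : T -> 'M[R]_(p, q)) (N : T -> 'M[R]_(q, r))
    (M0 : 'M[R]_(p, q)) (N0 : 'M[R]_(q, r)) :
  (forall i j, M t i j @[t --> F] --> M0 i j) ->
  (forall i j, N t i j @[t --> F] --> N0 i j) ->
  forall i j, (M t *m N t) i j @[t --> F] --> (M0 *m N0) i j.
Proof.
move=> MM0 NN0 i j; under eq_fun do rewrite mxE; rewrite mxE.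
by apply: cvg_big_sum => k; exact: cvgM.
Qed.

Lemma cvg_det k (M : T -> 'M[R]_k) (M0 : 'M[R]_k) :
  (forall i j, M t i j @[t --> F] --> M0 i j) ->
  \det (M t) @[t --> F] --> \det M0.
Proof.
move=> MM0; apply: cvg_big_sum => s.
by apply: cvgM; [exact: cvg_cst | apply: cvg_big_prod].
Qed.

End Limits.

(* Choose [X], [Y] with [X *m M0 *m Y = 1]; the determinant of [X *m M t *m Y]
   then stays nonzero near the limit. *)
Lemma mxrank_lsc {FF : ProperFilter F} p q (M : T -> 'M[R]_(p, q)) (M0 : 'M[R]_(p, q)) :
  M t @[t --> F] --> M0 -> \forall t \near F, (\rank M0 <= \rank (M t))%N.
Proof.
move=> MM0; set r := \rank M0.
pose X : 'M[R]_(r, p) := pid_mx r *m invmx (col_ebase M0).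
pose Y : 'M[R]_(q, r) := invmx (row_ebase M0) *m pid_mx r.
have XM0Y : X *m M0 *m Y = 1%:M.
  rewrite /X /Y -{2}(mulmx_ebase M0) !mulmxA mulmxKV ?col_ebase_unit //.
  rewrite -!mulmxA mulKVmx ?row_ebase_unit // !mulmxA !mul_pid_mx.
  rewrite /r minnn (minn_idPr (rank_leq_row _)) minnn (minn_idPr (rank_leq_col _)).
  exact: pid_mx_1.
have entries i j : M t i j @[t --> F] --> M0 i j.
  exact: continuous_cvg (@coord_continuous R p q i j M0) MM0.
have cst_entries a b (Z : 'M[R]_(a, b)) i j : Z i j @[_ --> F] --> Z i j.
  exact: cvg_cst.
have detXMY : \det (X *m M t *m Y) @[t --> F] --> (1 : R).
  rewrite -(det1 R r) -XM0Y; apply: cvg_det.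
  apply: cvg_mulmx_entries (cst_entries _ _ Y).
  exact: cvg_mulmx_entries (cst_entries _ _ X) entries.
near=> t.
have : X *m M t *m Y \in unitmx.
  by rewrite unitmxE unitfE; near: t; exact: cvgr_neq0 detXMY (oner_neq0 R).
move/mxrank_unit <-.
exact: leq_trans (mxrankM_maxl _ _) (mxrankM_maxr _ _).
Unshelve. all: by end_near.
Qed.

End RankLowerSemicontinuity.

Lemma trmx11 (R : nzRingType) (S : 'M[R]_1) : S^T = S.
Proof. by rewrite [S]mx11_scalar tr_scalar_mx. Qed.

Section SymplecticPlaneScaling.
Variables (R : realType) (m : nat).
Local Notation J := (Jstd R m).
Local Notation n := (m + m)%N.

Lemma trmx_Jstd : J^T = - J.
Proof.
by rewrite /Jstd tr_block_mx !trmx0 trmx1 linearN /= trmx1 opp_block_mx oppr0 opprK.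
Qed.

Lemma mulmx_Jstd_tr : J *m J^T = 1%:M.
Proof.
rewrite trmx_Jstd mulmxN /Jstd mulmx_block !mulmx0 !mul0mx !mulmx1 !mulmxN !mulmx1.
by rewrite !add0r !addr0 opp_block_mx !opprK oppr0 -scalar_mx_block.
Qed.

Lemma Jstd_isotropic (x : 'cV[R]_n) : x^T *m J *m x = 0.
Proof.
have : (x^T *m J *m x)^T = - (x^T *m J *m x).
  by rewrite !trmx_mul trmxK trmx_Jstd mulNmx mulmxN mulmxA.
rewrite trmx11 => /(congr1 (fun S : 'M[R]_1 => S 0 0)) /=.
rewrite [in RHS]mxE => xJx.
by apply/matrixP => i j; rewrite !ord1 [in RHS]mxE; lra.
Qed.

Lemma symplecticM (A B : 'M[R]_n) :
  symplectic A -> symplectic B -> symplectic (A *m B).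
Proof.
rewrite /symplectic => sA sB.
by rewrite trmx_mul !mulmxA -(mulmxA B^T) -(mulmxA B^T) sA sB.
Qed.

Lemma Jstd_nondegenerate (v : 'cV[R]_n) : v != 0 ->
  exists u, v^T *m J *m u = 1%:M.
Proof.
move=> v0; set c := (v^T *m v) 0 0.
have c0 : c != 0.
  apply: contra v0 => /eqP vv0; apply/eqP/matrixP => i j; rewrite !ord1 mxE.
  have sq0 : \sum_k v k 0 ^+ 2 = 0.
    by rewrite -[RHS]vv0 /c mxE; apply: eq_bigr => k _; rewrite mxE expr2.
  by apply/eqP; rewrite -sqrf_eq0 (psumr_eq0P (fun k _ => sqr_ge0 (v k 0)) sq0).
exists (c^-1 *: (J^T *m v)).
rewrite -scalemxAr mulmxA -(mulmxA v^T) mulmx_Jstd_tr mulmx1 [v^T *m v]mx11_scalar.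
by rewrite scale_scalar_mx mulVf.
Qed.

(* Given [omega(v, u) = 1], this matrix maps [x] to
   [x + (s - 1) omega(x, u) v + (s^-1 - 1) omega(v, x) u]: it scales [v] by [s]
   and [u] by [s^-1] and fixes the omega-orthogonal complement of [v] and [u]. *)
Definition plane_scaling (u v : 'cV[R]_n) (s : R) : 'M[R]_n :=
  1%:M + (s - 1) *: (v *m u^T *m J^T) + (s^-1 - 1) *: (u *m v^T *m J).

Lemma plane_scaling1 (u v : 'cV[R]_n) : plane_scaling u v 1 = 1%:M.
Proof. by rewrite /plane_scaling subrr invr1 subrr !scale0r !addr0. Qed.

Section PlaneScaling.
Variables (u v : 'cV[R]_n).
Hypothesis omega_vu : v^T *m J *m u = 1%:M.

Let omega_uv : u^T *m J^T *m v = 1%:M.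
Proof. by rewrite -[LHS]trmx11 !trmx_mul !trmxK mulmxA omega_vu. Qed.

Lemma plane_scaling_eigen s : plane_scaling u v s *m v = s *: v.
Proof.
rewrite /plane_scaling !mulmxDl mul1mx -!scalemxAl -!(mulmxA v) -!(mulmxA u).
rewrite omega_uv Jstd_isotropic mulmx1 mulmx0 scaler0 addr0.
by rewrite scalerBl scale1r addrC subrK.
Qed.

Lemma symplectic_plane_scaling s : s != 0 -> symplectic (plane_scaling u v s).
Proof.
move=> s0; set a := s - 1; set b := s^-1 - 1.
set E := u *m v^T *m J; set F := v *m u^T *m J^T.
have outer (x y z w : 'cV[R]_n) (K K' : 'M[R]_n) :
    x *m y^T *m K *m (z *m w^T *m K') = x *m (y^T *m K *m z) *m w^T *m K'.
  by rewrite !mulmxA.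
have EE : E *m E = E by rewrite outer omega_vu mulmx1.
have FF : F *m F = F by rewrite outer omega_uv mulmx1.
have EF : E *m F = 0 by rewrite outer Jstd_isotropic mulmx0 !mul0mx.
have FE : F *m E = 0.
  by rewrite outer trmx_Jstd mulmxN mulNmx Jstd_isotropic oppr0 mulmx0 !mul0mx.
have FtJ : F^T *m J = J *m E by rewrite /F /E !trmx_mul !trmxK !mulmxA.
have EtJ : E^T *m J = J *m F.
  by rewrite /F /E !trmx_mul !trmxK trmx_Jstd !mulmxA mulmxN !mulNmx.
have ab : a + b + a * b = 0 by rewrite /a /b; field.
have intertwine : (plane_scaling u v s)^T *m J = J *m (1%:M + a *: E + b *: F).
  by rewrite !linearD !linearZ /= trmx1 !mulmxDl ?mulmxDr mul1mx mulmx1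
    -!scalemxAl FtJ EtJ.
have inverse : (1%:M + a *: E + b *: F) *m plane_scaling u v s = 1%:M.
  rewrite /plane_scaling -/a -/b -/E -/F !mulmxDl !mulmxDr !mul1mx !mulmx1.
  rewrite -!scalemxAl -!scalemxAr !scalerA EE FF EF FE !scaler0 !addr0.
  clearbody E F; apply/matrixP => i j; rewrite !mxE.
  by rewrite -[RHS]addr0 -(mul0r (E i j + F i j)) -ab; ring.
by rewrite /symplectic intertwine -mulmxA inverse mulmx1.
Qed.

End PlaneScaling.
End SymplecticPlaneScaling.

Section ProjectionSubmersion.
Variables (R : realType) (m : nat).
Local Notation n := (m + m)%N.

Lemma dimker_shiftE (Q : 'M[R]_n) l : dimker_shift Q l = (n - \rank (Q - l%:M)%R)%N.
Proof. by rewrite /dimker_shift mxrank_ker mxrank_tr. Qed.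

Lemma dimker_shift_eigen (Q : 'M[R]_n) l : (0 < dimker_shift Q l)%N ->
  exists2 v : 'cV[R]_n, v != 0 & Q *m v = l *: v.
Proof.
rewrite /dimker_shift lt0n mxrank_eq0 => K0.
have w0 : nz_row (kermx (Q - l%:M)^T) != 0 by rewrite nz_row_eq0.
have wK : nz_row (kermx (Q - l%:M)^T) *m (Q - l%:M)^T = 0.
  by apply/eqP; rewrite -sub_kermx nz_row_sub.
exists (nz_row (kermx (Q - l%:M)^T))^T; first by rewrite trmx_eq0.
apply/eqP; rewrite -subr_eq0 -mul_scalar_mx -mulmxBl.
by rewrite -[X in X == 0]trmxK trmx_mul trmxK wK trmx0.
Qed.

Lemma dimker_shift_eq1 (Q Q' : 'M[R]_n) l l' (v : 'cV[R]_n) :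
  dimker_shift Q l = 1%N -> (\rank (Q - l%:M)%R <= \rank (Q' - l'%:M)%R)%N ->
  v != 0 -> Q' *m v = l' *: v -> dimker_shift Q' l' = 1%N.
Proof.
move=> kerQ rankQQ' v0 Q'v.
have vK : (v^T <= kermx (Q' - l'%:M)^T)%MS.
  by rewrite sub_kermx -trmx_mul mulmxBl Q'v mul_scalar_mx subrr trmx0.
have := mxrankS vK; rewrite rank_rV trmx_eq0 v0 -/(dimker_shift Q' l') /=.
move: kerQ rankQQ'; rewrite !dimker_shiftE.
set r := \rank (Q - _); set r' := \rank (Q' - _); lia.
Qed.

Lemma differentiable_affine_curve (V : normedModType R) (C0 C1 C2 : V)
    (f g : R -> R) x :
  differentiable f x -> differentiable g x ->
  differentiable (fun t => C0 + f t *: C1 + g t *: C2) x.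
Proof.
move=> df dg; apply: differentiableD; last exact: differentiableZl.
by apply: differentiableD; [exact: differentiable_cst | exact: differentiableZl].
Qed.

Lemma G1_proj_submersive_at (p : 'M[R]_n * R) : G1 p -> proj_submersive_at p.
Proof.
case: p => Q l [/= sQ [l_gt0 kerQ]].
have [v v0 Qv] : exists2 v : 'cV[R]_n, v != 0 & Q *m v = l *: v.
  by apply: dimker_shift_eigen; rewrite kerQ.
have [u omega_vu] := Jstd_nondegenerate v0.
pose gQ t := Q *m plane_scaling u v (1 + t).
pose gl t := l * (1 + t).
have dshift : differentiable (fun t : R => 1 + t) (0 : R).
  by apply/derivable1_diffP/derivableD; [exact: derivable_cst | exact: derivable_id].
have dgQ : differentiable gQ (0 : R).
  have -> : gQ = fun t => Q + (1 + t - 1) *: (Q *m (v *m u^T *m (Jstd R m)^T))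
                         + ((1 + t)^-1 - 1) *: (Q *m (u *m v^T *m Jstd R m)).
    by apply/funext => t; rewrite /gQ /plane_scaling !mulmxDr mulmx1 -!scalemxAr.
  apply: differentiable_affine_curve.
    exact: differentiableB dshift (differentiable_cst _ _).
  apply: differentiableB (differentiable_cst _ _); apply/derivable1_diffP.
  by apply: derivableV; [rewrite addr0 oner_neq0 | exact/derivable1_diffP].
have dgl : is_derive (0 : R) (1 : R) gl (l *: (0 + 1)).
  by apply: is_deriveZ; apply: is_deriveD.
have shift_cvg : gQ t - (gl t)%:M @[t --> (0 : R)] --> Q - l%:M.
  have -> : Q - l%:M = gQ 0 - (gl 0)%:M.
    by rewrite /gQ /gl addr0 plane_scaling1 mulmx1 mulr1.
  apply: (@differentiable_continuous _ _ _ _ (fun t => gQ t - (gl t)%:M)).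
  apply: differentiableB dgQ _.
  under eq_fun do rewrite -scalemx1.
  by apply: differentiableZl; apply/derivable1_diffP; case: dgl.
exists gQ, gl; split.
- by rewrite /gQ /gl addr0 plane_scaling1 mulmx1 mulr1.
- exact/derivable1_diffP.
- by case: dgl.
- have rank_near := mxrank_lsc shift_cvg.
  near=> t.
  have st_gt0 : 0 < 1 + t.
    have : `|t| < 1 by near: t; exact: (@nbhs0_lt R R 1 ltr01).
    by move/ltr_normlP => [? _]; lra.
  have gQv : gQ t *m v = gl t *: v.
    by rewrite /gQ -mulmxA (plane_scaling_eigen omega_vu) -scalemxAr Qv scalerA mulrC.
  split; [|split] => /=.
  + exact: symplecticM sQ (symplectic_plane_scaling omega_vu (lt0r_neq0 st_gt0)).
  + exact: mulr_gt0.
  + apply: dimker_shift_eq1 kerQ _ v0 gQv; near: t; exact: rank_near.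
- by rewrite derive_val add0r scaler1 gt_eqF.
Unshelve. all: by end_near.
Qed.

End ProjectionSubmersion.

(* The submersion property holds at every point of [G1]. *)
Theorem lemmaA6 (R : realType) (n : nat) :
  forall p0 : 'M[R]_((n - 1) + (n - 1)) * R, @G0 R (n - 1) p0 ->
    \forall p \near p0, @G1 R (n - 1) p -> @proj_submersive_at R (n - 1) p.
Proof.
by move=> p0 _; apply: (nearW (nbhs_filter p0)) => p; exact: G1_proj_submersive_at.
Qed.
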